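(* Let $h>0$ and $\mathbb{T}:=\{0,h,2h,3h,\ldots\}$. Let $p_0,p_1\in\mathbb{C}\setminus\{-\tfrac{1}{h}\}$ with $p_0\ne p_1$, and define $p:\mathbb{T}\to\mathbb{C}$ by $p(t)=p_0$ if $\tfrac{t}{h}\equiv 0 \pmod 2$ and $p(t)=p_1$ if $\tfrac{t}{h}\equiv 1\pmod 2$. Consider the equation $$\Delta_h x(t)-p(t)x(t)=0,\qquad t\in\mathbb{T},\qquad (\ast)$$ where $\Delta_h x(t):=\frac{x(t+h)-x(t)}{h}$. Assume $0<|1+hp_0||1+hp_1|\ne 1$. Let $\varepsilon>0$ be fixed and let $\phi:\mathbb{T}\to\mathbb{C}$ satisfy $|\Delta_h\phi(t)-p(t)\phi(t)|\le\varepsilon$ for all $t\in\mathbb{T}$. Let $e_p(t):=\prod_{j=0}^{t/h-1}(1+hp(jh))$ for $t\in\mathbb{T}$ (empty product $=1$, so $e_p(0)=1$). Then: (i) If $|1+hp_0||1+hp_1|>1$, then $\lim_{t\to\infty}\frac{\phi(t)}{e_p(t)}$ exists, and the function $x(t):=\left(\lim_{s\to\infty}\frac{\phi(s)}{e_p(s)}\right)e_p(t)$ is the unique solution of $(\ast)$ with $|\phi(t)-x(t)|\le K_1\varepsilon$ for all $t\in\mathbb{T}$, where $$K_1:=h\max\left\{\frac{1+|1+hp_0|}{-1+|1+hp_0||1+hp_1|},\ \frac{1+|1+hp_1|}{-1+|1+hp_0||1+hp_1|}\right\};$$ moreover $K_1$ is the minimum Ulam stability constant for $(\ast)$. (ii)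 If $0<|1+hp_0||1+hp_1|<1$, then any solution $x$ of $(\ast)$ with $|\phi(0)-x(0)|<\varepsilon h\,\frac{1+|1+hp_1|}{1-|1+hp_0||1+hp_1|}$ satisfies $$|\phi(t)-x(t)|<\varepsilon h\max\left\{\frac{1+|1+hp_0|}{1-|1+hp_0||1+hp_1|},\ \frac{1+|1+hp_1|}{1-|1+hp_0||1+hp_1|}\right\}$$ for all $t\in\mathbb{T}$.
   Context: A constant $K>0$ is an Ulam stability constant for $(\ast)$ on $\mathbb{T}$ if for every $\varepsilon>0$ and every $\phi:\mathbb{T}\to\mathbb{C}$ with $|\Delta_h\phi(t)-p(t)\phi(t)|\le\varepsilon$ for all $t\in\mathbb{T}$, there exists a solution $x:\mathbb{T}\to\mathbb{C}$ of $(\ast)$ with $|\phi(t)-x(t)|\le K\varepsilon$ for all $t\in\mathbb{T}$. The equation has Ulam stability if such a $K$ exists. ''Minimum Ulam stability constant'' means $K_1$ is an Ulam stability constant and no positive number smaller than $K_1$ is one. *)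

From Stdlib Require Import Reals Lra.
From Coquelicot Require Import Coquelicot.
Open Scope C_scope.

(* The time scale T = {0, h, 2h, ...} is parametrized by n : nat via t = n*h;
   a function T -> C is represented as a function nat -> C. *)

Definition delta_h (h : R) (x : nat -> C) (n : nat) : C :=
  (x (S n) - x n) / RtoC h.

Definition pcoef (p0 p1 : C) (n : nat) : C :=
  if Nat.even n then p0 else p1.

Fixpoint ep (h : R) (p0 p1 : C) (n : nat) : C :=
  match n with
  | O => 1
  | S m => ep h p0 p1 m * (1 + RtoC h * pcoef p0 p1 m)
  end.

Definition is_solution (h : R) (p0 p1 : C) (x : nat -> C) : Prop :=
  forall n, delta_h h x n - pcoef p0 p1 n * x n = 0.

Definition ulam_constant (h : R) (p0 p1 : C) (K : R) : Prop :=
  (0 < K)%R /\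
  forall eps : R, (0 < eps)%R ->
  forall phi : nat -> C,
    (forall n, (Cmod (delta_h h phi n - pcoef p0 p1 n * phi n) <= eps)%R) ->
    exists x : nat -> C, is_solution h p0 p1 x /\
      forall n, (Cmod (phi n - x n) <= K * eps)%R.

Definition min_ulam_constant (h : R) (p0 p1 : C) (K : R) : Prop :=
  ulam_constant h p0 p1 K /\
  forall K' : R, (0 < K')%R -> (K' < K)%R -> ~ ulam_constant h p0 p1 K'.

From Stdlib Require Import Reals Lra Lia.
From Coquelicot Require Import Coquelicot.
Open Scope C_scope.

(* Write a_n = 1 + h p(nh). The 2-periodic
   weight w_n = (1 + |a_(n+1)|) / (|a_0||a_1| - 1) satisfies w_n |a_n| - w_(n+1) = 1.
   If |a_0||a_1| > 1, then |e_p| grows geometrically and h w_n / |e_p(n)| is the tail sum of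
   h / |e_p(k)| over k > n; hence phi / e_p is Cauchy, and its limit L gives
   |phi(n) - L e_p(n)| <= eps h w_n <= K1 eps. The perturbation with residual
   e_p(n+1) / |e_p(n+1)| and |phi(n)| = h w_n shows that K1 is optimal: a solution within
   K < K1 of it would be bounded, hence zero, forcing h w_0, h w_1 <= K.
   If |a_0||a_1| < 1, the same identity propagates the strict bound |phi - x| < - eps h w_n
   along the recursion. *)

Lemma Cmod_lim_sub_le (u : nat -> C) (L : C) (n : nat) (b : R) :
  filterlim u eventually (locally L) ->
  (forall m, (n <= m)%nat -> (Cmod (u m - u n) <= b)%R) ->
  (Cmod (L - u n) <= b)%R.
Proof.
  intros Hu Hb.
  apply (closed_filterlim_loc u (fun z => Cmod (z - u n) <= b)%R L Hu).
  - exists n. exact Hb.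
  - apply (closed_comp (fun z => Cmod (z - u n)) (fun r => r <= b)%R).
    + intro z.
      apply (filterlim_comp _ _ _ (fun z => minus z (u n)) (@norm C_AbsRing C_NormedModule)
               _ (locally (minus z (u n)))).
      * apply (continuous_minus (fun z : C => z) (fun _ => u n)).
        -- apply continuous_id.
        -- apply continuous_const.
      * exact (@filterlim_norm C_AbsRing C_NormedModule (minus z (u n))).
    + apply closed_le.
Qed.

Lemma Cmod_sub_le (a b : C) : (Cmod (a - b) <= Cmod a + Cmod b)%R.
Proof. unfold Cminus. rewrite <- (Cmod_opp b). apply Cmod_triangle. Qed.

Section PeriodicCoefficient.

Variables (h : R) (p0 p1 : C).
Hypothesis hpos : (0 < h)%R.

Definition ep_factor (n : nat) : C := 1 + RtoC h * pcoef p0 p1 n.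

Definition residual (x : nat -> C) (n : nat) : C := delta_h h x n - pcoef p0 p1 n * x n.

Definition alpha0 : R := Cmod (1 + RtoC h * p0).
Definition alpha1 : R := Cmod (1 + RtoC h * p1).

Hypothesis hgain_pos : (0 < alpha0 * alpha1)%R.

Lemma RtoC_h_neq0 : RtoC h <> 0.
Proof. intro E. injection E. lra. Qed.

Lemma alpha_pos : (0 < alpha0 /\ 0 < alpha1)%R.
Proof.
  pose proof (Cmod_ge_0 (1 + RtoC h * p0)). pose proof (Cmod_ge_0 (1 + RtoC h * p1)).
  fold alpha0 alpha1 in *. split; nra.
Qed.

Lemma Cmod_ep_factor n : Cmod (ep_factor n) = if Nat.even n then alpha0 else alpha1.
Proof. unfold ep_factor, pcoef. destruct (Nat.even n); reflexivity. Qed.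

Lemma Cmod_ep_factor_pos n : (0 < Cmod (ep_factor n))%R.
Proof. rewrite Cmod_ep_factor. destruct (Nat.even n); apply alpha_pos. Qed.

Lemma ep_factor_neq0 n : ep_factor n <> 0.
Proof. intro E. pose proof (Cmod_ep_factor_pos n) as H. rewrite E, Cmod_0 in H. lra. Qed.

Lemma ep_S n : ep h p0 p1 (S n) = ep h p0 p1 n * ep_factor n.
Proof. reflexivity. Qed.

Lemma Cmod_ep_pos n : (0 < Cmod (ep h p0 p1 n))%R.
Proof.
  induction n as [|n IH].
  - simpl. rewrite Cmod_1. lra.
  - rewrite ep_S, Cmod_mult. pose proof (Cmod_ep_factor_pos n). nra.
Qed.

Lemma ep_neq0 n : ep h p0 p1 n <> 0.
Proof. intro E. pose proof (Cmod_ep_pos n) as H. rewrite E, Cmod_0 in H. lra. Qed.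

Lemma residual_step (x : nat -> C) n :
  x (S n) = ep_factor n * x n + RtoC h * residual x n.
Proof. unfold ep_factor, residual, delta_h. field. exact RtoC_h_neq0. Qed.

Lemma is_solution_ep (x : nat -> C) n :
  is_solution h p0 p1 x -> x n = x 0%nat * ep h p0 p1 n.
Proof.
  intro Hx. induction n as [|n IH].
  - simpl. ring.
  - rewrite residual_step, (Hx n : residual x n = 0), IH, ep_S. ring.
Qed.

Lemma ep_is_solution (c : C) : is_solution h p0 p1 (fun n => c * ep h p0 p1 n).
Proof. intro n. unfold delta_h. simpl. field. exact RtoC_h_neq0. Qed.

Lemma is_solution_sub (x y : nat -> C) :
  is_solution h p0 p1 x -> is_solution h p0 p1 y ->
  is_solution h p0 p1 (fun n => x n - y n).
Proof.
  intros Hx Hy n. change (residual (fun n => x n - y n) n = 0).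
  replace (residual (fun n => x n - y n) n) with (residual x n - residual y n)
    by (unfold residual, delta_h; field; exact RtoC_h_neq0).
  rewrite (Hx n : residual x n = 0), (Hy n : residual y n = 0). ring.
Qed.

Lemma Cmod_ep_double k :
  Cmod (ep h p0 p1 (2 * k)) = ((alpha0 * alpha1) ^ k)%R /\
  Cmod (ep h p0 p1 (2 * k + 1)) = ((alpha0 * alpha1) ^ k * alpha0)%R.
Proof.
  induction k as [|k [IHeven IHodd]].
  - simpl. rewrite Cmod_mult, Cmod_1, !Rmult_1_l. split; reflexivity.
  - assert (Hodd : (2 * S k = S (2 * k + 1))%nat) by lia.
    assert (Heven : (2 * S k + 1 = S (2 * S k))%nat) by lia.
    rewrite Heven, ep_S, Cmod_mult, Cmod_ep_factor, Nat.even_even, Hodd.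
    rewrite ep_S, Cmod_mult, Cmod_ep_factor, Nat.even_odd, IHodd.
    split; simpl; ring.
Qed.

Lemma Cmod_ep_lower_bound (hg : (1 <= alpha0 * alpha1)%R) K n : (2 * K <= n)%nat ->
  ((alpha0 * alpha1) ^ K * Rmin 1 alpha0 <= Cmod (ep h p0 p1 n))%R.
Proof.
  intro Hn. destruct alpha_pos as [Ha0 _].
  pose proof (pow_le _ K (Rle_trans _ _ _ Rle_0_1 hg)).
  destruct (Nat.Even_or_Odd n) as [[k ->]|[k ->]];
    assert (Hpow : ((alpha0 * alpha1) ^ K <= (alpha0 * alpha1) ^ k)%R)
      by (apply Rle_pow; [exact hg | lia]);
    destruct (Cmod_ep_double k) as [Eeven Eodd].
  - rewrite Eeven. pose proof (Rmin_l 1 alpha0). nra.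
  - rewrite Eodd. pose proof (Rmin_r 1 alpha0). nra.
Qed.

Lemma Cmod_ep_unbounded (hg : (1 < alpha0 * alpha1)%R) (B : R) :
  exists N, forall n, (N <= n)%nat -> (B < Cmod (ep h p0 p1 n))%R.
Proof.
  destruct alpha_pos as [Ha0 _].
  set (m := Rmin 1 alpha0). assert (Hm : (0 < m)%R) by (apply Rmin_glb_lt; lra).
  destruct (Pow_x_infinity (alpha0 * alpha1) ltac:(rewrite Rabs_pos_eq; lra) (Rabs B / m + 1))
    as [K HK].
  exists (2 * K)%nat. intros n Hn.
  specialize (HK K (le_n K)). rewrite Rabs_pos_eq in HK by (apply pow_le; lra).
  pose proof (Cmod_ep_lower_bound ltac:(lra) K n Hn) as Hlow. fold m in Hlow.
  assert (Rabs B / m * m = Rabs B)%R by (field; lra).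
  pose proof (Rle_abs B). nra.
Qed.

Lemma bounded_solution_zero (hg : (1 < alpha0 * alpha1)%R) (x : nat -> C) (M : R) :
  is_solution h p0 p1 x -> (forall n, (Cmod (x n) <= M)%R) -> forall n, x n = 0.
Proof.
  intros Hx HM.
  assert (Hx0 : x 0%nat = 0).
  { destruct (Ceq_dec (x 0%nat) 0) as [|Hc]; [assumption | exfalso].
    apply Cmod_gt_0 in Hc.
    destruct (Cmod_ep_unbounded hg (M / Cmod (x 0%nat))) as [N HN].
    specialize (HN N (le_n N)). specialize (HM N).
    rewrite (is_solution_ep x N Hx), Cmod_mult in HM.
    assert (M / Cmod (x 0%nat) * Cmod (x 0%nat) = M)%R by (field; lra).
    nra. }
  intro n. rewrite (is_solution_ep x n Hx), Hx0. ring.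
Qed.

Lemma error_step (eps : R) (phi x : nat -> C) n :
  is_solution h p0 p1 x -> (Cmod (residual phi n) <= eps)%R ->
  (Cmod (phi (S n) - x (S n)) <= Cmod (ep_factor n) * Cmod (phi n - x n) + h * eps)%R.
Proof.
  intros Hx Hphi.
  replace (phi (S n) - x (S n)) with (ep_factor n * (phi n - x n) + RtoC h * residual phi n)
    by (rewrite (residual_step phi), (residual_step x), (Hx n : residual x n = 0); ring).
  eapply Rle_trans; [apply Cmod_triangle |].
  rewrite !Cmod_mult, Cmod_R, Rabs_pos_eq by lra. nra.
Qed.

Definition weight (n : nat) : R :=
  if Nat.even n then ((1 + alpha1) / (-1 + alpha0 * alpha1))%R
  else ((1 + alpha0) / (-1 + alpha0 * alpha1))%R.

Lemma weight_step (hg : (alpha0 * alpha1 <> 1)%R) n :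
  (weight n * Cmod (ep_factor n) - weight (S n) = 1)%R.
Proof.
  assert ((-1 + alpha0 * alpha1)%R <> 0%R) by lra.
  unfold weight. rewrite Cmod_ep_factor, Nat.even_succ, <- Nat.negb_even.
  destruct (Nat.even n); simpl; field; assumption.
Qed.

Definition K1 : R :=
  (h * Rmax ((1 + alpha0) / (-1 + alpha0 * alpha1)) ((1 + alpha1) / (-1 + alpha0 * alpha1)))%R.

Lemma weight_le_K1 n : (h * weight n <= K1)%R.
Proof.
  unfold K1, weight.
  destruct (Nat.even n); apply Rmult_le_compat_l; try lra; [apply Rmax_r | apply Rmax_l].
Qed.

Lemma weight_pos (hg : (1 < alpha0 * alpha1)%R) n : (0 < weight n)%R.
Proof.
  destruct alpha_pos. unfold weight.
  destruct (Nat.even n); apply Rdiv_lt_0_compat; lra.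
Qed.

Lemma opp_weight (hg : (alpha0 * alpha1 <> 1)%R) n :
  (- weight n = if Nat.even n then (1 + alpha1) / (1 - alpha0 * alpha1)
                else (1 + alpha0) / (1 - alpha0 * alpha1))%R.
Proof.
  assert ((-1 + alpha0 * alpha1)%R <> 0%R) by lra.
  assert ((1 - alpha0 * alpha1)%R <> 0%R) by lra.
  unfold weight. destruct (Nat.even n); field; split; assumption.
Qed.

(* Closed form of the tail sum [sum_(k > n) h / |e_p k|] when [alpha0 * alpha1 > 1]. *)
Definition tail (n : nat) : R := (h * weight n / Cmod (ep h p0 p1 n))%R.

Lemma tail_step (hg : (alpha0 * alpha1 <> 1)%R) n :
  (tail n - tail (S n) = h / Cmod (ep h p0 p1 (S n)))%R.
Proof.
  unfold tail. rewrite ep_S, Cmod_mult.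
  pose proof (weight_step hg n). pose proof (Cmod_ep_pos n). pose proof (Cmod_ep_factor_pos n).
  replace (weight (S n)) with (weight n * Cmod (ep_factor n) - 1)%R by lra.
  field. lra.
Qed.

Lemma tail_pos (hg : (1 < alpha0 * alpha1)%R) n : (0 < tail n)%R.
Proof.
  unfold tail. pose proof (weight_pos hg n). pose proof (Cmod_ep_pos n).
  apply Rdiv_lt_0_compat; nra.
Qed.

Lemma tail_vanishes (hg : (1 < alpha0 * alpha1)%R) (d : R) : (0 < d)%R ->
  exists N, forall n, (N <= n)%nat -> (tail n < d)%R.
Proof.
  intro Hd. destruct (Cmod_ep_unbounded hg (K1 / d)) as [N HN].
  exists N. intros n Hn. specialize (HN n Hn).
  pose proof (weight_le_K1 n). pose proof (Cmod_ep_pos n).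
  unfold tail. apply (Rmult_lt_reg_r (Cmod (ep h p0 p1 n))); [assumption |].
  replace (h * weight n / Cmod (ep h p0 p1 n) * Cmod (ep h p0 p1 n))%R with (h * weight n)%R
    by (field; lra).
  assert (K1 / d * d = K1)%R by (field; lra).
  nra.
Qed.

Section StabilityBound.

Hypothesis hg : (1 < alpha0 * alpha1)%R.
Variables (eps : R) (phi : nat -> C).
Hypothesis heps : (0 < eps)%R.
Hypothesis hphi : forall n, (Cmod (residual phi n) <= eps)%R.

Definition ratio (n : nat) : C := phi n / ep h p0 p1 n.

Lemma ratio_step n : (Cmod (ratio (S n) - ratio n) <= eps * (tail n - tail (S n)))%R.
Proof.
  rewrite (tail_step (Rgt_not_eq _ _ hg)).
  replace (ratio (S n) - ratio n) with (RtoC h * residual phi n / ep h p0 p1 (S n)).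
  2: { unfold ratio. rewrite (residual_step phi n), ep_S. field.
       split; [apply ep_neq0 | apply ep_factor_neq0]. }
  rewrite Cmod_div by apply ep_neq0. rewrite Cmod_mult, Cmod_R, Rabs_pos_eq by lra.
  unfold Rdiv. rewrite <- Rmult_assoc, (Rmult_comm eps h).
  apply Rmult_le_compat_r; [apply Rlt_le, Rinv_0_lt_compat, Cmod_ep_pos |].
  apply Rmult_le_compat_l; [lra | apply hphi].
Qed.

Lemma ratio_cauchy n m : (n <= m)%nat -> (Cmod (ratio m - ratio n) <= eps * tail n)%R.
Proof.
  intro Hnm.
  assert (Htelescope : (Cmod (ratio m - ratio n) <= eps * (tail n - tail m))%R).
  { induction Hnm as [|m Hnm IH].
    - unfold Cminus. rewrite Cplus_opp_r, Cmod_0. lra.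
    - replace (ratio (S m) - ratio n) with ((ratio (S m) - ratio m) + (ratio m - ratio n))
        by ring.
      eapply Rle_trans; [apply Cmod_triangle |]. pose proof (ratio_step m). lra. }
  pose proof (tail_pos hg m). nra.
Qed.

Lemma ratio_converges : exists L, filterlim ratio eventually (locally L).
Proof.
  apply (filterlim_locally_cauchy (U := C_CompleteNormedModule) (F := eventually) ratio). intro d.
  destruct (tail_vanishes hg (d / eps)) as [N HN].
  { apply Rdiv_lt_0_compat; [apply cond_pos | exact heps]. }
  assert (Hclose : forall m n, (N <= m <= n)%nat -> ball (ratio m) d (ratio n)).
  { intros m n [HNm Hmn]. apply C_NormedModule_mixin_compat1.
    eapply Rle_lt_trans; [apply (ratio_cauchy m n Hmn) |].
    specialize (HN m HNm). apply (Rmult_lt_compat_l eps) in HN; [| exact heps].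
    replace (eps * (d / eps))%R with (pos d) in HN by (field; lra). exact HN. }
  exists (fun n => (N <= n)%nat). split; [exists N; auto |].
  intros m n Hm Hn. destruct (Nat.le_ge_cases m n).
  - apply Hclose. lia.
  - apply ball_sym, Hclose. lia.
Qed.

Lemma stability_bound (L : C) n : filterlim ratio eventually (locally L) ->
  (Cmod (phi n - L * ep h p0 p1 n) <= eps * (h * weight n))%R.
Proof.
  intro HL.
  replace (phi n - L * ep h p0 p1 n) with (- ep h p0 p1 n * (L - ratio n))
    by (unfold ratio; field; apply ep_neq0).
  rewrite Cmod_mult, Cmod_opp.
  pose proof (Cmod_lim_sub_le ratio L n _ HL (ratio_cauchy n)). pose proof (Cmod_ep_pos n).
  replace (eps * (h * weight n))%R with (Cmod (ep h p0 p1 n) * (eps * tail n))%R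
    by (unfold tail; field; lra).
  apply Rmult_le_compat_l; lra.
Qed.

End StabilityBound.

Lemma K1_ulam_constant (hg : (1 < alpha0 * alpha1)%R) : ulam_constant h p0 p1 K1.
Proof.
  split.
  - pose proof (weight_le_K1 0). pose proof (weight_pos hg 0). nra.
  - intros eps heps phi hphi.
    destruct (ratio_converges hg eps phi heps hphi) as [L HL].
    exists (fun n => L * ep h p0 p1 n). split; [apply ep_is_solution |].
    intro n. pose proof (stability_bound hg eps phi heps hphi L n HL). pose proof (weight_le_K1 n).
    nra.
Qed.

(* A perturbation for which [stability_bound] is an equality. *)
Definition extremal (n : nat) : C := - RtoC (tail n) * ep h p0 p1 n.

Lemma Cmod_residual_extremal (hg : (alpha0 * alpha1 <> 1)%R) n :
  Cmod (residual extremal n) = 1%R.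
Proof.
  assert (E : RtoC h * residual extremal n
              = RtoC (h / Cmod (ep h p0 p1 (S n))) * ep h p0 p1 (S n)).
  { transitivity (extremal (S n) - ep_factor n * extremal n).
    - rewrite (residual_step extremal n). ring.
    - rewrite <- (tail_step hg n), RtoC_minus. unfold extremal. rewrite ep_S. ring. }
  apply (f_equal Cmod) in E. pose proof (Cmod_ep_pos (S n)).
  rewrite !Cmod_mult, !Cmod_R, !Rabs_pos_eq in E
    by (try apply Rlt_le, Rdiv_lt_0_compat; lra).
  apply (Rmult_eq_reg_l h); [| lra]. rewrite E. field. lra.
Qed.

Lemma Cmod_extremal (hg : (1 < alpha0 * alpha1)%R) n : Cmod (extremal n) = (h * weight n)%R.
Proof.
  unfold extremal. pose proof (tail_pos hg n). pose proof (Cmod_ep_pos n).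
  rewrite Cmod_mult, Cmod_opp, Cmod_R, Rabs_pos_eq by lra.
  unfold tail. field. lra.
Qed.

Lemma K1_minimal (hg : (1 < alpha0 * alpha1)%R) (K : R) :
  (0 < K)%R -> (K < K1)%R -> ~ ulam_constant h p0 p1 K.
Proof.
  intros HK HKK1 [_ Hulam].
  destruct (Hulam 1%R Rlt_0_1 extremal) as [x [Hx Hclose]].
  { intro n. change (Cmod (residual extremal n) <= 1)%R.
    rewrite (Cmod_residual_extremal (Rgt_not_eq _ _ hg)). lra. }
  assert (Hx0 : forall n, x n = 0).
  { apply (bounded_solution_zero hg x (K * 1 + K1)%R Hx). intro n.
    replace (x n) with (extremal n - (extremal n - x n)) by ring.
    eapply Rle_trans; [apply Cmod_sub_le |].
    rewrite Cmod_extremal by exact hg.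
    pose proof (Hclose n). pose proof (weight_le_K1 n). lra. }
  assert (Hweight : forall n, (h * weight n <= K)%R).
  { intro n. rewrite <- Cmod_extremal by exact hg. specialize (Hclose n).
    rewrite Hx0 in Hclose. replace (extremal n - 0) with (extremal n) in Hclose by ring.
    lra. }
  apply (Rlt_not_le _ _ HKK1). unfold K1. rewrite <- RmaxRmult by lra.
  apply Rmax_lub; [exact (Hweight 1%nat) | exact (Hweight 0%nat)].
Qed.

Lemma expansive_case (hg : (1 < alpha0 * alpha1)%R) (eps : R) (heps : (0 < eps)%R)
  (phi : nat -> C) (hphi : forall n, (Cmod (residual phi n) <= eps)%R) :
  exists L : C,
    filterlim (fun n => phi n / ep h p0 p1 n) eventually (locally L) /\
    is_solution h p0 p1 (fun n => L * ep h p0 p1 n) /\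
    (forall n, (Cmod (phi n - L * ep h p0 p1 n) <= K1 * eps)%R) /\
    (forall y : nat -> C, is_solution h p0 p1 y ->
       (forall n, (Cmod (phi n - y n) <= K1 * eps)%R) ->
       forall n, y n = L * ep h p0 p1 n) /\
    min_ulam_constant h p0 p1 K1.
Proof.
  destruct (ratio_converges hg eps phi heps hphi) as [L HL].
  assert (Hbound : forall n, (Cmod (phi n - L * ep h p0 p1 n) <= K1 * eps)%R).
  { intro n. pose proof (stability_bound hg eps phi heps hphi L n HL).
    pose proof (weight_le_K1 n). nra. }
  exists L. split; [exact HL |]. split; [apply ep_is_solution |]. split; [exact Hbound |].
  split.
  - intros y Hy Hclose n.
    assert (Hdiff : forall m, y m - L * ep h p0 p1 m = 0).
    { apply (bounded_solution_zero hg _ (K1 * eps + K1 * eps)%R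
               (is_solution_sub y _ Hy (ep_is_solution L))).
      intro m. replace (y m - L * ep h p0 p1 m)
        with ((phi m - L * ep h p0 p1 m) - (phi m - y m)) by ring.
      eapply Rle_trans; [apply Cmod_sub_le |]. pose proof (Hbound m). pose proof (Hclose m).
      lra. }
    replace (y n) with ((y n - L * ep h p0 p1 n) + L * ep h p0 p1 n) by ring.
    rewrite Hdiff. ring.
  - split; [exact (K1_ulam_constant hg) |]. intros K HK HKK1. exact (K1_minimal hg K HK HKK1).
Qed.

Lemma error_lt_opp_weight (hg : (alpha0 * alpha1 < 1)%R) (eps : R) (phi x : nat -> C)
  (hphi : forall n, (Cmod (residual phi n) <= eps)%R) (hx : is_solution h p0 p1 x) :
  (Cmod (phi 0%nat - x 0%nat) < eps * h * - weight 0)%R ->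
  forall n, (Cmod (phi n - x n) < eps * h * - weight n)%R.
Proof.
  intros H0 n. induction n as [|n IH]; [exact H0 |].
  eapply Rle_lt_trans; [apply (error_step eps phi x n hx (hphi n)) |].
  pose proof (weight_step (Rlt_not_eq _ _ hg) n) as Hstep. pose proof (Cmod_ep_factor_pos n).
  replace (eps * h * - weight (S n))%R
    with (Cmod (ep_factor n) * (eps * h * - weight n) + h * eps)%R
    by (replace (weight (S n)) with (weight n * Cmod (ep_factor n) - 1)%R by lra; ring).
  apply Rplus_lt_compat_r, Rmult_lt_compat_l; assumption.
Qed.

Lemma contractive_case (hg : (alpha0 * alpha1 < 1)%R) (eps : R) (heps : (0 < eps)%R)
  (phi x : nat -> C) (hphi : forall n, (Cmod (residual phi n) <= eps)%R)
  (hx : is_solution h p0 p1 x) :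
  (Cmod (phi 0%nat - x 0%nat) < eps * h * ((1 + alpha1) / (1 - alpha0 * alpha1)))%R ->
  forall n, (Cmod (phi n - x n) < eps * h *
    Rmax ((1 + alpha0) / (1 - alpha0 * alpha1)) ((1 + alpha1) / (1 - alpha0 * alpha1)))%R.
Proof.
  intros H0 n. pose proof (Rlt_not_eq _ _ hg) as hne.
  rewrite <- (opp_weight hne 0 : (- weight 0 = (1 + alpha1) / (1 - alpha0 * alpha1))%R) in H0.
  eapply Rlt_le_trans; [exact (error_lt_opp_weight hg eps phi x hphi hx H0 n) |].
  apply Rmult_le_compat_l; [nra |].
  rewrite opp_weight by exact hne. destruct (Nat.even n); [apply Rmax_r | apply Rmax_l].
Qed.

End PeriodicCoefficient.

Theorem theorem2p2 (h : R) (p0 p1 : C)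
  (hpos : (0 < h)%R)
  (hp0 : p0 <> - (1 / RtoC h)) (hp1 : p1 <> - (1 / RtoC h))
  (hp01 : p0 <> p1)
  (hprod_pos : (0 < Cmod (1 + RtoC h * p0) * Cmod (1 + RtoC h * p1))%R)
  (hprod_ne1 : (Cmod (1 + RtoC h * p0) * Cmod (1 + RtoC h * p1) <> 1)%R)
  (eps : R) (heps : (0 < eps)%R) (phi : nat -> C)
  (hphi : forall n, (Cmod (delta_h h phi n - pcoef p0 p1 n * phi n) <= eps)%R) :
  let a0 := Cmod (1 + RtoC h * p0) in
  let a1 := Cmod (1 + RtoC h * p1) in
  let K1 := (h * Rmax ((1 + a0) / (-1 + a0 * a1)) ((1 + a1) / (-1 + a0 * a1)))%R in
  ((1 < a0 * a1)%R ->
     exists L : C,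
       filterlim (fun n => phi n / ep h p0 p1 n) eventually (locally L) /\
       is_solution h p0 p1 (fun n => L * ep h p0 p1 n) /\
       (forall n, (Cmod (phi n - L * ep h p0 p1 n) <= K1 * eps)%R) /\
       (forall y : nat -> C, is_solution h p0 p1 y ->
          (forall n, (Cmod (phi n - y n) <= K1 * eps)%R) ->
          forall n, y n = L * ep h p0 p1 n) /\
       min_ulam_constant h p0 p1 K1) /\
  ((a0 * a1 < 1)%R ->
     forall x : nat -> C, is_solution h p0 p1 x ->
       (Cmod (phi 0%nat - x 0%nat) < eps * h * ((1 + a1) / (1 - a0 * a1)))%R ->
       forall n, (Cmod (phi n - x n) <
         eps * h * Rmax ((1 + a0) / (1 - a0 * a1)) ((1 + a1) / (1 - a0 * a1)))%R).
Proof.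
  (* [hp0] and [hp1] follow from [hprod_pos]. *)
  intros a0 a1 K. split.
  - intro hg. exact (expansive_case h p0 p1 hpos hprod_pos hg eps heps phi hphi).
  - intros hg x hx. exact (contractive_case h p0 p1 hpos hprod_pos hg eps heps phi x hphi hx).
Qed.
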